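(* Let $X$ be a compact, zero-dimensional metric space with a continuous free action of a countable amenable group $G$, and let $(F_n)$ be a Følner sequence of $G$ as in the context. For every $n$ there exists a clopen set $V\subset X$ such that (1) the sets $g(V)$, $g\in F_n$, are pairwise disjoint, and (2) there exists $N\ge n$ with $\bigcup_{g\in F_N}g(V)=X$.
   Context: The Følner sequence $(F_n)$ consists of finite sets with $|F_n\triangle gF_n|/|F_n|\to0$ for all $g$, and is assumed to satisfy $e\in F_n$, $F_n\subset F_{n+1}$ for all $n$, and every $g\in G$ belongs to $F_n$ for all sufficiently large $n$. The action is free if $gx=x$ implies $g=e$. *)

From Stdlib Require Import Reals List Arith.
Open Scope R_scope.


Record group := Group {
  gcar :> Type;
  gmul : gcar -> gcar -> gcar;
  ginv : gcar -> gcar;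
  gone : gcar;
  gmulA : forall a b c, gmul a (gmul b c) = gmul (gmul a b) c;
  gmul1 : forall a, gmul gone a = a;
  gmulV : forall a, gmul (ginv a) a = gone
}.

Definition countable_group (G : group) : Prop :=
  exists f : G -> nat, forall a b, f a = f b -> a = b.

(** Finite subsets of G are represented by duplicate-free lists. *)
Definition gtranslate (G : group) (g : G) (F : list G) : list G :=
  map (gmul G g) F.

Definition symdiff_card (G : group)
  (eqd : forall a b : G, {a = b} + {a <> b}) (g : G) (F : list G) : nat :=
  length (filter (fun x => if in_dec eqd x (gtranslate G g F) then false else true) F)
  + length (filter (fun y => if in_dec eqd y F then false else true) (gtranslate G g F)).

Definition folner (G : group) (eqd : forall a b : G, {a = b} + {a <> b})
  (F : nat -> list G) : Prop :=
  (forall n, NoDup (F n)) /\ (forall n, F n <> nil) /\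
  (forall g : G, Un_cv (fun n => INR (symdiff_card G eqd g (F n)) / INR (length (F n))) 0).

Definition amenable (G : group) (eqd : forall a b : G, {a = b} + {a <> b}) : Prop :=
  exists F, folner G eqd F.

(** Følner sequence with the standing assumptions of the paper:
    e in F_n, F_n subset F_{n+1}, every g eventually in F_n. *)
Definition nice_folner (G : group) (eqd : forall a b : G, {a = b} + {a <> b})
  (F : nat -> list G) : Prop :=
  folner G eqd F /\
  (forall n, In (gone G) (F n)) /\
  (forall n g, In g (F n) -> In g (F (S n))) /\
  (forall g : G, exists N, forall n, (N <= n)%nat -> In g (F n)).

Record metric_space := MetricSpace {
  mcar :> Type;
  dist : mcar -> mcar -> R;
  dist_nonneg : forall x y, 0 <= dist x y;
  dist_sym : forall x y, dist x y = dist y x;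
  dist_eq0 : forall x y, dist x y = 0 <-> x = y;
  dist_tri : forall x y z, dist x z <= dist x y + dist y z
}.

Definition is_open (X : metric_space) (U : X -> Prop) : Prop :=
  forall x, U x -> exists eps, 0 < eps /\ forall y, dist X x y < eps -> U y.

Definition is_closed (X : metric_space) (U : X -> Prop) : Prop :=
  is_open X (fun x => ~ U x).

Definition clopen (X : metric_space) (U : X -> Prop) : Prop :=
  is_open X U /\ is_closed X U.

Definition compact_space (X : metric_space) : Prop :=
  forall (I : Type) (U : I -> X -> Prop),
    (forall i, is_open X (U i)) -> (forall x, exists i, U i x) ->
    exists l : list I, forall x, exists i, In i l /\ U i x.

Definition zero_dimensional (X : metric_space) : Prop :=
  forall (U : X -> Prop) x, is_open X U -> U x ->
    exists V, clopen X V /\ V x /\ forall y, V y -> U y.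

Definition ms_continuous (X : metric_space) (f : X -> X) : Prop :=
  forall x eps, 0 < eps -> exists delta, 0 < delta /\
    forall y, dist X x y < delta -> dist X (f x) (f y) < eps.

(** Continuous action of G on X (G discrete). *)
Definition continuous_action (G : group) (X : metric_space) (act : G -> X -> X) : Prop :=
  (forall x, act (gone G) x = x) /\
  (forall g h x, act (gmul G g h) x = act g (act h x)) /\
  (forall g, ms_continuous X (act g)).

Definition free_action (G : group) (X : metric_space) (act : G -> X -> X) : Prop :=
  forall g x, act g x = x -> g = gone G.

Definition img (G : group) (X : metric_space) (act : G -> X -> X) (g : G)
  (V : X -> Prop) : X -> Prop :=
  fun x => exists v, V v /\ act g v = x.

(* For distinct g, h in F_n the map y |-> h^-1 g y has no fixed point, since the action is
   free; by continuity and zero-dimensionality every point has a clopen neighbourhood W with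
   W and h^-1 g W disjoint for all such pairs. Compactness leaves finitely many W_1, ..., W_m
   covering X, and V is built greedily: V_0 = {}, and V_(i+1) adds to V_i the points of W_i
   that no h^-1 g sends into V_i. Then the translates g V, g in F_n, are pairwise disjoint,
   and by maximality every x lies in V or in some g^-1 h V; these finitely many g^-1 h all
   lie in F_N for N large. *)
From Pilot Require Import Defs.
From Stdlib Require Import Reals List Arith Lra Lia Classical.
Open Scope R_scope.

Section Clopen.
Variable X : metric_space.

Lemma is_open_ext (A B : X -> Prop) :
  (forall y, A y <-> B y) -> is_open X A -> is_open X B.
Proof.
  intros AB HA x Bx. destruct (HA x) as [e [e_gt0 He]]; [apply AB; exact Bx|].
  exists e; split; [exact e_gt0|]. intros y Hy; apply AB; auto.
Qed.

Lemma clopen_ext (A B : X -> Prop) :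
  (forall y, A y <-> B y) -> clopen X A -> clopen X B.
Proof.
  intros AB [HA HAc]; split.
  - exact (is_open_ext A B AB HA).
  - apply (is_open_ext (fun y => ~ A y)); [|exact HAc]. intros y; rewrite (AB y); tauto.
Qed.

Lemma is_open_or (A B : X -> Prop) :
  is_open X A -> is_open X B -> is_open X (fun y => A y \/ B y).
Proof.
  intros HA HB x [Ax|Bx].
  - destruct (HA x Ax) as [e [e_gt0 He]]. exists e; split; auto.
  - destruct (HB x Bx) as [e [e_gt0 He]]. exists e; split; auto.
Qed.

Lemma is_open_and (A B : X -> Prop) :
  is_open X A -> is_open X B -> is_open X (fun y => A y /\ B y).
Proof.
  intros HA HB x [Ax Bx].
  destruct (HA x Ax) as [e1 [e1_gt0 He1]]. destruct (HB x Bx) as [e2 [e2_gt0 He2]].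
  exists (Rmin e1 e2); split; [apply Rmin_glb_lt; assumption|].
  intros y Hy; split.
  - apply He1. eapply Rlt_le_trans; [exact Hy| apply Rmin_l].
  - apply He2. eapply Rlt_le_trans; [exact Hy| apply Rmin_r].
Qed.

Lemma clopen_not (A : X -> Prop) : clopen X A -> clopen X (fun y => ~ A y).
Proof.
  intros [HA HAc]; split; [exact HAc|].
  apply (is_open_ext A); [|exact HA]. intros y; split; [tauto| apply NNPP].
Qed.

Lemma clopen_or (A B : X -> Prop) :
  clopen X A -> clopen X B -> clopen X (fun y => A y \/ B y).
Proof.
  intros [HA HAc] [HB HBc]; split.
  - exact (is_open_or A B HA HB).
  - apply (is_open_ext (fun y => ~ A y /\ ~ B y)); [intros y; tauto|].
    exact (is_open_and _ _ HAc HBc).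
Qed.

Lemma clopen_and (A B : X -> Prop) :
  clopen X A -> clopen X B -> clopen X (fun y => A y /\ B y).
Proof.
  intros [HA HAc] [HB HBc]; split.
  - exact (is_open_and A B HA HB).
  - apply (is_open_ext (fun y => ~ A y \/ ~ B y)).
    + intros y; split; [tauto| apply not_and_or].
    + exact (is_open_or _ _ HAc HBc).
Qed.

Lemma clopen_True : clopen X (fun _ => True).
Proof.
  split; [intros x _; exists 1; split; [lra|auto]|].
  intros x Hx; exfalso; apply Hx; exact I.
Qed.

Lemma clopen_False : clopen X (fun _ => False).
Proof.
  split; [intros x []|].
  intros x _; exists 1; split; [lra|auto].
Qed.

Lemma clopen_forall_in {A : Type} (L : list A) (P : A -> X -> Prop) :
  (forall a, In a L -> clopen X (P a)) -> clopen X (fun y => forall a, In a L -> P a y).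
Proof.
  induction L as [|a L IH]; intros HP.
  - apply (clopen_ext (fun _ => True)); [|exact clopen_True].
    intros y; split; [intros _ b []|auto].
  - apply (clopen_ext (fun y => P a y /\ forall b, In b L -> P b y)).
    + intros y; split.
      * intros [Pay PLy] b [<-|Hb]; auto.
      * intros H; split; [apply H; left|intros b Hb; apply H; right]; auto.
    + apply clopen_and; [apply HP; left; reflexivity|].
      apply IH; intros b Hb; apply HP; right; exact Hb.
Qed.

Lemma clopen_preimage (f : X -> X) (A : X -> Prop) :
  ms_continuous X f -> clopen X A -> clopen X (fun y => A (f y)).
Proof.
  assert (open_preimage :
    forall B, ms_continuous X f -> is_open X B -> is_open X (fun y => B (f y))).
  { intros B Hf HB x Bfx. destruct (HB _ Bfx) as [e [e_gt0 He]].
    destruct (Hf x e e_gt0) as [d [d_gt0 Hd]]. exists d; split; auto. }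
  intros Hf [HA HAc]; split.
  - exact (open_preimage A Hf HA).
  - exact (open_preimage (fun z => ~ A z) Hf HAc).
Qed.

Lemma ms_continuous_comp (f g : X -> X) :
  ms_continuous X f -> ms_continuous X g -> ms_continuous X (fun y => f (g y)).
Proof.
  intros Hf Hg x e e_gt0. destruct (Hf (g x) e e_gt0) as [d2 [d2_gt0 Hd2]].
  destruct (Hg x d2 d2_gt0) as [d1 [d1_gt0 Hd1]]. exists d1; split; auto.
Qed.

Lemma is_open_ball (x : X) (r : R) : is_open X (fun y => Defs.dist X x y < r).
Proof.
  intros y Hy. exists (r - Defs.dist X x y); split; [lra|].
  intros z Hz. pose proof (Defs.dist_tri X x y z). lra.
Qed.

Lemma ball_disjoint_image (t : X -> X) (x : X) :
  ms_continuous X t -> t x <> x ->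
  exists r, 0 < r /\ forall y, Defs.dist X x y < r -> ~ Defs.dist X x (t y) < r.
Proof.
  intros Ht tx_neq.
  set (d := Defs.dist X x (t x)).
  assert (d_gt0 : 0 < d).
  { destruct (Rle_lt_or_eq_dec 0 d (dist_nonneg X _ _)) as [Hd|Hd]; [exact Hd|].
    exfalso; apply tx_neq; symmetry; apply (dist_eq0 X); unfold d in Hd; auto. }
  destruct (Ht x (d / 2)) as [del [del_gt0 Hdel]]; [lra|].
  exists (Rmin del (d / 2)); split; [apply Rmin_glb_lt; lra|].
  intros y Hy Hty.
  pose proof (Rmin_l del (d / 2)). pose proof (Rmin_r del (d / 2)).
  assert (Hclose : Defs.dist X (t x) (t y) < d / 2) by (apply Hdel; lra).
  pose proof (Defs.dist_tri X x (t y) (t x)) as Htri.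
  rewrite (Defs.dist_sym X (t y) (t x)) in Htri. unfold d in *. lra.
Qed.

End Clopen.

Lemma uniform_radius {A : Type} (Q : A -> R -> Prop) (L : list A) :
  (forall a r r', Q a r -> 0 < r' -> r' <= r -> Q a r') ->
  (forall a, In a L -> exists r, 0 < r /\ Q a r) ->
  exists r, 0 < r /\ forall a, In a L -> Q a r.
Proof.
  intros Qmono. induction L as [|a L IH]; intros HL.
  - exists 1; split; [lra| intros a []].
  - destruct (HL a (or_introl eq_refl)) as [r1 [r1_gt0 Q1]].
    destruct IH as [r2 [r2_gt0 Q2]]; [intros b Hb; apply HL; right; exact Hb|].
    assert (rmin_gt0 : 0 < Rmin r1 r2) by (apply Rmin_glb_lt; assumption).
    exists (Rmin r1 r2); split; [exact rmin_gt0|].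
    intros b [<-|Hb].
    + exact (Qmono _ _ _ Q1 rmin_gt0 (Rmin_l r1 r2)).
    + exact (Qmono _ _ _ (Q2 b Hb) rmin_gt0 (Rmin_r r1 r2)).
Qed.

Section GreedyUnion.
Variables (T : Type) (ts : list (T -> T)).

Definition separated (V : T -> Prop) : Prop :=
  forall t, In t ts -> forall y, V y -> ~ V (t y).

Fixpoint greedy_union (Ws : list (T -> Prop)) : T -> Prop :=
  match Ws with
  | nil => fun _ => False
  | W :: Ws' => fun y =>
      greedy_union Ws' y \/ (W y /\ forall t, In t ts -> ~ greedy_union Ws' (t y))
  end.

Hypothesis ts_inv : forall t, In t ts -> exists t', In t' ts /\ forall y, t' (t y) = y.

Lemma greedy_union_separated (Ws : list (T -> Prop)) :
  (forall W, In W Ws -> separated W) -> separated (greedy_union Ws).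
Proof.
  induction Ws as [|W Ws IH]; intros HWs t Ht y; simpl; [tauto|].
  specialize (IH (fun W' HW' => HWs W' (or_intror HW'))).
  intros [Vy|[Wy Ny]] [Vty|[Wty Nty]].
  - exact (IH t Ht y Vy Vty).
  - destruct (ts_inv t Ht) as [t' [Ht' t'K]]. apply (Nty t' Ht'). rewrite t'K. exact Vy.
  - exact (Ny t Ht Vty).
  - exact (HWs W (or_introl eq_refl) t Ht y Wy Wty).
Qed.

Lemma greedy_union_maximal (Ws : list (T -> Prop)) W y :
  In W Ws -> W y -> greedy_union Ws y \/ exists t, In t ts /\ greedy_union Ws (t y).
Proof.
  induction Ws as [|W0 Ws IH]; intros HW Wy; simpl; [destruct HW|].
  destruct HW as [<-|HW].
  - destruct (classic (exists t, In t ts /\ greedy_union Ws (t y))) as [[t [Ht Vty]]|Nty].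
    + right; exists t; split; [exact Ht|left; exact Vty].
    + left; right; split; [exact Wy|]. intros t Ht Vty; apply Nty; exists t; auto.
  - destruct (IH HW Wy) as [Vy|[t [Ht Vty]]]; [left; left; exact Vy|].
    right; exists t; split; [exact Ht|left; exact Vty].
Qed.

End GreedyUnion.

Lemma greedy_union_clopen (X : metric_space) (ts : list (X -> X)) (Ws : list (X -> Prop)) :
  (forall t, In t ts -> ms_continuous X t) -> (forall W, In W Ws -> clopen X W) ->
  clopen X (greedy_union X ts Ws).
Proof.
  intros Hts. induction Ws as [|W Ws IH]; intros HWs; simpl; [apply clopen_False|].
  assert (HV : clopen X (greedy_union X ts Ws)) by (apply IH; intros; apply HWs; right; auto).
  apply clopen_or; [exact HV|].
  apply clopen_and; [apply HWs; left; reflexivity|].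
  apply (clopen_forall_in X ts (fun t y => ~ greedy_union X ts Ws (t y))).
  intros t Ht. apply (clopen_not X (fun y => greedy_union X ts Ws (t y))).
  exact (clopen_preimage X t _ (Hts t Ht) HV).
Qed.

Section SeparatedClopen.
Variables (X : metric_space) (ts : list (X -> X)).
Hypothesis Xcomp : compact_space X.
Hypothesis Xzd : zero_dimensional X.
Hypothesis ts_continuous : forall t, In t ts -> ms_continuous X t.
Hypothesis ts_fixpoint_free : forall t x, In t ts -> t x <> x.
Hypothesis ts_inv : forall t, In t ts -> exists t', In t' ts /\ forall y, t' (t y) = y.

Lemma separated_clopen_nbhd (x : X) : exists W, clopen X W /\ W x /\ separated X ts W.
Proof.
  destruct (uniform_radius
    (fun t r => forall y, Defs.dist X x y < r -> ~ Defs.dist X x (t y) < r) ts)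
    as [r [r_gt0 Hr]].
  - intros t r r' Hball r'_gt0 r'_le y Hy Hty. apply (Hball y); lra.
  - intros t Ht. exact (ball_disjoint_image X t x (ts_continuous t Ht) (ts_fixpoint_free t x Ht)).
  - destruct (Xzd (fun y => Defs.dist X x y < r) x (is_open_ball X x r)) as [W [HW [Wx Wball]]].
    { rewrite (proj2 (dist_eq0 X x x) eq_refl). exact r_gt0. }
    exists W; split; [exact HW|split; [exact Wx|]].
    intros t Ht y Wy Wty. exact (Hr t Ht y (Wball y Wy) (Wball _ Wty)).
Qed.

Lemma maximal_separated_clopen :
  exists V, clopen X V /\ separated X ts V /\
    forall y, V y \/ exists t, In t ts /\ V (t y).
Proof.
  set (I := {W : X -> Prop | clopen X W /\ separated X ts W}).
  destruct (Xcomp I (fun i => proj1_sig i)) as [l Hl].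
  - intros i. exact (proj1 (proj1 (proj2_sig i))).
  - intros x. destruct (separated_clopen_nbhd x) as [W [HW [Wx Wsep]]].
    exists (exist _ W (conj HW Wsep)). exact Wx.
  - set (Ws := map (fun i : I => proj1_sig i) l).
    assert (HWs : forall W, In W Ws -> clopen X W /\ separated X ts W).
    { intros W HW. apply in_map_iff in HW. destruct HW as [i [<- _]]. exact (proj2_sig i). }
    exists (greedy_union X ts Ws); split; [|split].
    + apply greedy_union_clopen; [exact ts_continuous|intros W HW; apply HWs, HW].
    + apply greedy_union_separated; [exact ts_inv|intros W HW; apply HWs, HW].
    + intros y. destruct (Hl y) as [i [Hi iy]].
      apply (greedy_union_maximal X ts Ws (proj1_sig i)); [apply in_map; exact Hi|exact iy].
Qed.

End SeparatedClopen.

Lemma ginv_mul_eq1 (G : group) (g h : G) : gmul G (ginv G h) g = gone G -> g = h.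
Proof.
  intros E.
  assert (Eg : g = gmul G (ginv G (ginv G h)) (gone G)).
  { rewrite <- E, gmulA, gmulV, gmul1. reflexivity. }
  assert (Eh : h = gmul G (ginv G (ginv G h)) (gone G)).
  { rewrite <- (gmulV G h), gmulA, gmulV, gmul1. reflexivity. }
  congruence.
Qed.

Lemma eventually_incl (G : group) (F : nat -> list G) :
  (forall g : G, exists N, forall n, (N <= n)%nat -> In g (F n)) ->
  forall L : list G, exists N, forall m, (N <= m)%nat -> forall a, In a L -> In a (F m).
Proof.
  intros HF L; induction L as [|a L [N IH]].
  - exists 0%nat; intros m _ a [].
  - destruct (HF a) as [Na HNa]. exists (Nat.max Na N). intros m Hm b [<-|Hb].
    + apply HNa. lia.
    + apply IH; [lia|exact Hb].
Qed.

Section Markers.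
Variables (G : group) (eqd : forall a b : G, {a = b} + {a <> b}).
Variables (X : metric_space) (act : G -> X -> X).
Hypothesis Hact : continuous_action G X act.
Hypothesis Hfree : free_action G X act.

Lemma actK (g : G) (y : X) : act (ginv G g) (act g y) = y.
Proof. destruct Hact as [act1 [actM _]]. rewrite <- actM, gmulV, act1. reflexivity. Qed.

Lemma actKV (g : G) (y : X) : act g (act (ginv G g) y) = y.
Proof.
  rewrite <- (actK (ginv G g) (act g (act (ginv G g) y))), (actK g (act (ginv G g) y)).
  apply actK.
Qed.

Definition shift (g h : G) (y : X) : X := act (ginv G h) (act g y).

Definition shifts (L : list G) : list (X -> X) :=
  flat_map (fun g => flat_map (fun h => if eqd g h then nil else shift g h :: nil) L) L.

Definition quotients (L : list G) : list G :=
  flat_map (fun g => map (gmul G (ginv G g)) L) L.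

Lemma in_shifts (L : list G) (t : X -> X) :
  In t (shifts L) <-> exists g h, In g L /\ In h L /\ g <> h /\ t = shift g h.
Proof.
  unfold shifts. rewrite in_flat_map. split.
  - intros [g [Hg Ht]]. rewrite in_flat_map in Ht. destruct Ht as [h [Hh Ht]].
    destruct (eqd g h) as [_|gh]; [destruct Ht|].
    destruct Ht as [<-|[]]. exists g, h; auto.
  - intros [g [h [Hg [Hh [gh ->]]]]]. exists g; split; [exact Hg|].
    apply in_flat_map. exists h; split; [exact Hh|].
    destruct (eqd g h) as [E|_]; [contradiction|left; reflexivity].
Qed.

Lemma in_quotients (L : list G) (g h : G) :
  In g L -> In h L -> In (gmul G (ginv G g) h) (quotients L).
Proof.
  intros Hg Hh. apply in_flat_map. exists g; split; [exact Hg|]. apply in_map; exact Hh.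
Qed.

Lemma shift_continuous (g h : G) : ms_continuous X (shift g h).
Proof.
  destruct Hact as [_ [_ act_cont]]. exact (ms_continuous_comp X _ _ (act_cont _) (act_cont g)).
Qed.

Lemma shift_fixpoint_free (g h : G) (x : X) : g <> h -> shift g h x <> x.
Proof.
  intros gh E. apply gh, ginv_mul_eq1, (Hfree _ x).
  destruct Hact as [_ [actM _]]. rewrite actM. exact E.
Qed.

Lemma shiftK (g h : G) (y : X) : shift h g (shift g h y) = y.
Proof. unfold shift. rewrite actKV. apply actK. Qed.

Lemma shift_act (g h : G) (v w : X) : act g v = act h w -> shift g h v = w.
Proof. intros E. unfold shift. rewrite E. apply actK. Qed.

Lemma act_quotient_shift (g h : G) (y : X) : act (gmul G (ginv G g) h) (shift g h y) = y.
Proof.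
  destruct Hact as [_ [actM _]]. unfold shift. rewrite actM, actKV. apply actK.
Qed.

Hypothesis Xcomp : compact_space X.
Hypothesis Xzd : zero_dimensional X.

Lemma clopen_marker (L : list G) :
  exists V, clopen X V /\
    (forall g h, In g L -> In h L -> g <> h ->
       forall x, ~ (img G X act g V x /\ img G X act h V x)) /\
    (forall x, V x \/ exists k, In k (quotients L) /\ img G X act k V x).
Proof.
  destruct (maximal_separated_clopen X (shifts L) Xcomp Xzd) as [V [HV [Vsep Vmax]]].
  - intros t Ht. apply in_shifts in Ht. destruct Ht as [g [h [_ [_ [_ ->]]]]].
    apply shift_continuous.
  - intros t x Ht. apply in_shifts in Ht. destruct Ht as [g [h [_ [_ [gh ->]]]]].
    exact (shift_fixpoint_free g h x gh).
  - intros t Ht. apply in_shifts in Ht. destruct Ht as [g [h [Hg [Hh [gh ->]]]]].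
    exists (shift h g); split; [apply in_shifts; exists h, g; auto|apply shiftK].
  - exists V; split; [exact HV|split].
    + intros g h Hg Hh gh x [[v [Vv <-]] [w [Vw Ew]]].
      assert (Hgh : In (shift g h) (shifts L)) by (apply in_shifts; exists g, h; auto).
      apply (Vsep _ Hgh v Vv). rewrite (shift_act g h v w (eq_sym Ew)). exact Vw.
    + intros x. destruct (Vmax x) as [Vx|[t [Ht Vtx]]]; [left; exact Vx|right].
      apply in_shifts in Ht. destruct Ht as [g [h [Hg [Hh [_ ->]]]]].
      exists (gmul G (ginv G g) h); split; [exact (in_quotients L g h Hg Hh)|].
      exists (shift g h x); split; [exact Vtx|apply act_quotient_shift].
Qed.

End Markers.

Theorem mainTheorem4 (G : group) (eqd : forall a b : G, {a = b} + {a <> b})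
  (Gcount : countable_group G) (Gamen : amenable G eqd)
  (X : metric_space) (Xcomp : compact_space X) (Xzd : zero_dimensional X)
  (act : G -> X -> X) (Hact : continuous_action G X act) (Hfree : free_action G X act)
  (F : nat -> list G) (HF : nice_folner G eqd F) :
  forall n : nat, exists V : X -> Prop,
    clopen X V /\
    (forall g h, In g (F n) -> In h (F n) -> g <> h ->
       forall x, ~ (img G X act g V x /\ img G X act h V x)) /\
    (exists N : nat, (n <= N)%nat /\
       forall x, exists g, In g (F N) /\ img G X act g V x).
Proof.
  intros n. destruct HF as [_ [F_one [_ F_exhaust]]].
  destruct (clopen_marker G eqd X act Hact Hfree Xcomp Xzd (F n)) as [V [HV [Vdisj Vcover]]].
  destruct (eventually_incl G F F_exhaust (quotients G (F n))) as [N HN].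
  exists V; split; [exact HV|split; [exact Vdisj|]].
  exists (Nat.max N n); split; [lia|].
  intros x. destruct (Vcover x) as [Vx|[k [Hk Vk]]].
  - exists (gone G); split; [apply F_one|].
    exists x; split; [exact Vx|apply Hact].
  - exists k; split; [apply HN; [lia|exact Hk]|exact Vk].
Qed.
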